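(* If $n$ is an odd integer, then $$\sum_{k=1}^\infty\frac{L_n^{2k}}{F_n^{2k}5^k(2k-1)(2k)(2k+1)}=\ln 2-\frac12\ln 5-\ln(F_n)+\frac{n}{\sqrt5}\,\frac{L_{2n}}{F_{2n}}\ln\alpha-\frac12.$$
   Context: $F_n$ and $L_n$ are the Fibonacci and Lucas numbers: $F_0=0,F_1=1$, $L_0=2,L_1=1$, and both satisfy $X_n=X_{n-1}+X_{n-2}$ (extended to all $n\in\mathbb Z$); equivalently $F_n=(\alpha^n-\beta^n)/(\alpha-\beta)$, $L_n=\alpha^n+\beta^n$ with $\alpha=(1+\sqrt5)/2$, $\beta=(1-\sqrt5)/2$. *)

From Stdlib Require Import Reals ZArith.
From Coquelicot Require Import Coquelicot.
Open Scope R_scope.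

Definition alpha : R := (1 + sqrt 5) / 2.
Definition beta : R := (1 - sqrt 5) / 2.

Definition Fib (n : Z) : R := (powerRZ alpha n - powerRZ beta n) / (alpha - beta).
Definition Luc (n : Z) : R := powerRZ alpha n + powerRZ beta n.

From Stdlib Require Import Reals ZArith Lra Lia.
From Coquelicot Require Import Coquelicot.
Open Scope R_scope.

(* For odd n put u = n ln(alpha).  Since alpha beta = -1, Binet's formulas become
   L_n = 2 sinh u and sqrt 5 F_n = 2 cosh u, so x := L_n / (sqrt 5 F_n) = tanh u,
   while L_2n = 2 cosh 2u and sqrt 5 F_2n = 2 sinh 2u.  The series is
   sum_k x^2k / ((2k-1) 2k (2k+1)); by partial fractions it splits into the series
   of artanh x (multiplied by x and by 1/x) and of ln(1 - x^2), giving
   ((x + 1/x) artanh x + ln(1 - x^2) - 1) / 2.  Finally artanh x = u,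
   1 - x^2 = 1 / cosh^2 u = 4 / (5 F_n^2) and x + 1/x = 2 coth 2u = 2 L_2n / (sqrt 5 F_2n). *)

Lemma Rabs_lt_1_between (x t : R) :
  Rabs x < 1 -> Rmin 0 x <= t <= Rmax 0 x -> Rabs t < 1.
Proof.
  intros hx ht; apply Rabs_def2 in hx; apply Rabs_def1;
    unfold Rmin, Rmax in ht; destruct (Rle_dec 0 x); lra.
Qed.

Lemma CV_radius_const_1 : CV_radius (fun _ : nat => 1) = 1.
Proof.
  rewrite (CV_radius_finite_DAlembert _ 1); [now rewrite Rinv_1 | intros; lra | lra |].
  apply is_lim_seq_ext with (fun _ => 1); [| apply is_lim_seq_const].
  intros n; now rewrite Rdiv_1_l, Rinv_1, Rabs_R1.
Qed.

Lemma PSeries_const_1 (t : R) : Rabs t < 1 -> PSeries (fun _ => 1) t = / (1 - t).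
Proof.
  intros ht; apply is_pseries_unique.
  eapply is_series_ext; [| exact (is_series_geom t ht)].
  intros n; unfold scal; simpl; unfold mult; simpl; rewrite Rmult_1_r; symmetry; apply pow_n_pow.
Qed.

Lemma is_RInt_inv_1_minus (x : R) : Rabs x < 1 ->
  is_RInt (fun t => / (1 - t)) 0 x (- ln (1 - x)).
Proof.
  intros hx.
  replace (- ln (1 - x)) with (minus (- ln (1 - x)) (- ln (1 - 0)))
    by (rewrite Rminus_0_r, ln_1; unfold minus, plus, opp; simpl; ring).
  apply (is_RInt_derive (fun t => - ln (1 - t))); intros t ht;
    pose proof (Rabs_def2 _ _ (Rabs_lt_1_between x t hx ht)).
  - auto_derive; [lra | field; lra].
  - apply (ex_derive_continuous (K := R_AbsRing) (V := R_NormedModule)); auto_derive; lra.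
Qed.

Lemma is_series_ln_1_minus (x : R) : Rabs x < 1 ->
  is_series (fun n => x ^ S n / INR (S n)) (- ln (1 - x)).
Proof.
  intros hx.
  assert (hr : Rbar_lt (Rabs x) (CV_radius (fun _ : nat => 1)))
    by (rewrite CV_radius_const_1; simpl; lra).
  assert (hint : RInt (PSeries (fun _ => 1)) 0 x = - ln (1 - x)).
  { apply is_RInt_unique, (is_RInt_ext (fun t => / (1 - t))); [| now apply is_RInt_inv_1_minus].
    intros t ht; symmetry; apply PSeries_const_1, (Rabs_lt_1_between x); lra. }
  pose proof (is_pseries_RInt _ _ hr) as hps; rewrite hint in hps.
  apply is_series_ext with (fun n => scal (pow_n x (S n)) (PS_Int (fun _ => 1) (S n))).
  - intros n; unfold scal, mult; cbn -[INR].
    replace (pow_n x n) with (x ^ n) by (symmetry; apply pow_n_pow); field; apply not_0_INR; lia.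
  - apply (is_series_incr_1 (fun k => scal (pow_n x k) (PS_Int (fun _ => 1) k))).
    unfold scal, plus, mult; cbn -[INR]; rewrite Rmult_0_r, Rplus_0_r; exact hps.
Qed.

Lemma is_series_even_terms (b : nat -> R) (l : R) :
  (forall j, b (S (2 * j)) = 0) -> is_series b l ->
  is_series (fun j => b (2 * j)%nat) l.
Proof.
  intros hodd hb.
  assert (hsum : forall N, sum_n (fun j => b (2 * j)%nat) N = sum_n b (2 * N)).
  { induction N as [| N IH]; [now rewrite !sum_O |].
    rewrite sum_Sn, IH.
    replace (2 * S N)%nat with (S (S (2 * N))) by lia.
    rewrite !sum_Sn, hodd; unfold plus; simpl; ring. }
  unfold is_series; apply filterlim_ext with (fun N => sum_n b (2 * N)).
  - intros N; now rewrite hsum.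
  - apply (filterlim_comp _ _ _ (fun N => 2 * N)%nat (sum_n b) eventually eventually);
      [| exact hb].
    apply eventually_subseq; intros; lia.
Qed.

Definition artanh (x : R) : R := / 2 * ln ((1 + x) / (1 - x)).

Lemma is_series_artanh (x : R) : Rabs x < 1 ->
  is_series (fun j => x ^ S (2 * j) / INR (S (2 * j))) (artanh x).
Proof.
  intros hx.
  assert (hx' : Rabs (- x) < 1) by now rewrite Rabs_Ropp.
  assert (heven : forall j, (- x) ^ (2 * j) = x ^ (2 * j))
    by (intros j; rewrite !pow_mult; f_equal; ring).
  pose proof (is_series_scal (/ 2) _ _
    (is_series_minus _ _ _ _ (is_series_ln_1_minus x hx) (is_series_ln_1_minus (- x) hx')))
    as hdiff.
  apply is_series_even_terms in hdiff.
  - replace (artanh x) with (scal (/ 2) (minus (- ln (1 - x)) (- ln (1 - - x)))).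
    + eapply is_series_ext; [| exact hdiff].
      intros j; rewrite <- !tech_pow_Rmult, heven.
      unfold scal, plus, opp, mult; cbn -[INR pow Nat.mul].
      field; apply not_0_INR; lia.
    + unfold artanh; apply Rabs_def2 in hx; rewrite ln_div by lra.
      unfold scal, minus, plus, opp, mult; cbn.
      replace (1 - - x) with (1 + x) by ring; ring.
  - intros j; unfold scal, plus, opp, mult; cbn -[INR pow Nat.mul].
    replace (S (S (2 * j))) with (2 * S j)%nat by lia; rewrite heven; ring.
Qed.

Lemma is_series_even_pow_div_consecutive (x : R) : x <> 0 -> Rabs x < 1 ->
  is_series
    (fun j => let k := INR (S j) in (x ^ 2) ^ S j / ((2 * k - 1) * (2 * k) * (2 * k + 1)))
    (/ 2 * ((x + / x) * artanh x + ln (1 - x ^ 2) - 1)).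
Proof.
  intros hx0 hx.
  assert (hx2 : Rabs (x ^ 2) < 1)
    by (rewrite <- RPow_abs; pose proof (Rabs_pos x); simpl; nra).
  pose proof (is_series_artanh x hx) as hA.
  assert (hA1 : is_series (fun j => x ^ S (2 * S j) / INR (S (2 * S j))) (artanh x - x)).
  { assert (hA0 : artanh x = artanh x - x + x ^ S (2 * 0) / INR (S (2 * 0)))
      by (simpl; field).
    rewrite hA0 in hA; exact (is_series_incr_1 _ _ hA). }
  (* 1 / ((2k-1) 2k (2k+1)) = (1 / (2k-1) + 1 / (2k+1)) / 2 - 1 / (2k) *)
  pose proof (is_series_scal (/ 2) _ _ (is_series_minus _ _ _ _
    (is_series_plus _ _ _ _ (is_series_scal x _ _ hA) (is_series_scal (/ x) _ _ hA1))
    (is_series_ln_1_minus (x ^ 2) hx2))) as hsum.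
  replace (/ 2 * ((x + / x) * artanh x + ln (1 - x ^ 2) - 1)) with
    (scal (/ 2) (minus (plus (scal x (artanh x)) (scal (/ x) (artanh x - x)))
      (- ln (1 - x ^ 2))))
    by (unfold scal, minus, plus, opp, mult; cbn -[artanh ln pow]; field; exact hx0).
  eapply is_series_ext; [| exact hsum].
  assert (hodd : forall m, x ^ S (2 * m) = x * (x ^ 2) ^ m)
    by (intros m; rewrite <- (tech_pow_Rmult x (2 * m)), pow_mult; reflexivity).
  intros j; cbv zeta.
  unfold scal, minus, plus, opp, mult; cbn -[INR pow Nat.mul].
  rewrite !hodd, <- !(tech_pow_Rmult (x ^ 2) j).
  rewrite !S_INR, !mult_INR, !S_INR, INR_0.
  pose proof (pos_INR j).
  field; repeat split; lra.
Qed.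

Lemma cosh_pos (t : R) : 0 < cosh t.
Proof. unfold cosh; pose proof (exp_pos t); pose proof (exp_pos (- t)); lra. Qed.

Lemma sinh_neq_0 (t : R) : t <> 0 -> sinh t <> 0.
Proof.
  intros ht hs; apply ht; unfold sinh in hs.
  assert (he : exp t = exp (- t)) by lra.
  apply exp_inv in he; lra.
Qed.

Lemma exp_double (t : R) : exp (2 * t) = exp t * exp t.
Proof. rewrite <- exp_plus; f_equal; ring. Qed.

Lemma sinh_double (t : R) : sinh (2 * t) = 2 * sinh t * cosh t.
Proof. unfold sinh, cosh; rewrite Ropp_mult_distr_r, !exp_double; field. Qed.

Lemma cosh_double (t : R) : cosh (2 * t) = sinh t ^ 2 + cosh t ^ 2.
Proof. unfold sinh, cosh; rewrite Ropp_mult_distr_r, !exp_double; field. Qed.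

Lemma cosh_sq_sub_sinh_sq (t : R) : cosh t ^ 2 - sinh t ^ 2 = 1.
Proof.
  unfold sinh, cosh; rewrite exp_Ropp; pose proof (exp_pos t); field; lra.
Qed.

Lemma Rabs_tanh_lt_1 (t : R) : Rabs (tanh t) < 1.
Proof.
  unfold tanh, sinh, cosh.
  pose proof (exp_pos t); pose proof (exp_pos (- t)).
  apply Rabs_def1; apply (Rmult_lt_reg_r ((exp t + exp (- t)) / 2)); try lra;
    unfold Rdiv; rewrite Rmult_assoc, Rinv_l; lra.
Qed.

Lemma tanh_neq_0 (t : R) : t <> 0 -> tanh t <> 0.
Proof.
  intros ht; unfold tanh, Rdiv; apply Rmult_integral_contrapositive; split.
  - now apply sinh_neq_0.
  - apply Rinv_neq_0_compat; pose proof (cosh_pos t); lra.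
Qed.

Lemma artanh_tanh (t : R) : artanh (tanh t) = t.
Proof.
  unfold artanh; replace ((1 + tanh t) / (1 - tanh t)) with (exp (2 * t)).
  - rewrite ln_exp; field.
  - unfold tanh, sinh, cosh; rewrite exp_Ropp, exp_double.
    pose proof (exp_pos t); field; repeat split; nra.
Qed.

Lemma one_minus_tanh_sq (t : R) : 1 - tanh t ^ 2 = / cosh t ^ 2.
Proof.
  pose proof (cosh_pos t).
  replace (/ cosh t ^ 2) with ((cosh t ^ 2 - sinh t ^ 2) / cosh t ^ 2)
    by (rewrite cosh_sq_sub_sinh_sq; field; lra).
  unfold tanh; field; lra.
Qed.

Lemma tanh_add_inv (t : R) : t <> 0 -> tanh t + / tanh t = 2 * cosh (2 * t) / sinh (2 * t).
Proof.
  intros ht; pose proof (cosh_pos t); pose proof (sinh_neq_0 t ht).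
  rewrite sinh_double, cosh_double; unfold tanh; field; lra.
Qed.

Lemma sqrt5_sq : sqrt 5 * sqrt 5 = 5.
Proof. apply sqrt_sqrt; lra. Qed.

Lemma sqrt5_pos : 0 < sqrt 5.
Proof. apply sqrt_lt_R0; lra. Qed.

Lemma alpha_sub_beta : alpha - beta = sqrt 5.
Proof. unfold alpha, beta; field. Qed.

Lemma alpha_mul_beta : alpha * beta = -1.
Proof. unfold alpha, beta; pose proof sqrt5_sq; nra. Qed.

Lemma alpha_gt_1 : 1 < alpha.
Proof. unfold alpha; pose proof sqrt5_sq; pose proof sqrt5_pos; nra. Qed.

Lemma powerRZ_alpha (m : Z) : powerRZ alpha m = exp (IZR m * ln alpha).
Proof. rewrite powerRZ_Rpower; [reflexivity | pose proof alpha_gt_1; lra]. Qed.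

Lemma powerRZ_beta (m : Z) :
  powerRZ beta m = powerRZ (-1) m * exp (- (IZR m * ln alpha)).
Proof.
  assert (hbeta : beta = -1 * / alpha).
  { pose proof alpha_gt_1; apply (Rmult_eq_reg_l alpha); [| lra].
    rewrite alpha_mul_beta; field; lra. }
  rewrite hbeta, powerRZ_mult, powerRZ_inv', powerRZ_alpha, exp_Ropp; reflexivity.
Qed.

Lemma powerRZ_neg1_even (m : Z) : Z.Even m -> powerRZ (-1) m = 1.
Proof.
  intros [k ->]; replace (2 * k)%Z with (k + k)%Z by lia.
  rewrite powerRZ_add, <- powerRZ_mult by lra.
  replace (-1 * -1) with 1 by ring; apply powerRZ_R1.
Qed.

Lemma powerRZ_neg1_odd (m : Z) : Z.Odd m -> powerRZ (-1) m = -1.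
Proof.
  intros [k ->]; rewrite powerRZ_add, powerRZ_neg1_even by (lra || now exists k).
  simpl; ring.
Qed.

Lemma Luc_even (m : Z) : Z.Even m -> Luc m = 2 * cosh (IZR m * ln alpha).
Proof.
  intros hm; unfold Luc, cosh; rewrite powerRZ_alpha, powerRZ_beta, powerRZ_neg1_even by exact hm.
  field.
Qed.

Lemma Luc_odd (m : Z) : Z.Odd m -> Luc m = 2 * sinh (IZR m * ln alpha).
Proof.
  intros hm; unfold Luc, sinh; rewrite powerRZ_alpha, powerRZ_beta, powerRZ_neg1_odd by exact hm.
  field.
Qed.

Lemma Fib_even (m : Z) : Z.Even m -> Fib m = 2 * sinh (IZR m * ln alpha) / sqrt 5.
Proof.
  intros hm; unfold Fib, sinh; rewrite alpha_sub_beta, powerRZ_alpha, powerRZ_beta,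
    powerRZ_neg1_even by exact hm.
  pose proof sqrt5_pos; field; lra.
Qed.

Lemma Fib_odd (m : Z) : Z.Odd m -> Fib m = 2 * cosh (IZR m * ln alpha) / sqrt 5.
Proof.
  intros hm; unfold Fib, cosh; rewrite alpha_sub_beta, powerRZ_alpha, powerRZ_beta,
    powerRZ_neg1_odd by exact hm.
  pose proof sqrt5_pos; field; lra.
Qed.

Lemma IZR_mul_ln_alpha_neq_0 (m : Z) : m <> 0%Z -> IZR m * ln alpha <> 0.
Proof.
  intros hm; apply Rmult_integral_contrapositive; split; [now apply not_0_IZR |].
  assert (0 < ln alpha) by (rewrite <- ln_1; apply ln_increasing; pose proof alpha_gt_1; lra).
  lra.
Qed.

Lemma pow_sq_div_sqrt (p q c : R) (m : nat) : 0 < c -> q <> 0 ->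
  ((p / (sqrt c * q)) ^ 2) ^ m = p ^ (2 * m) / (q ^ (2 * m) * c ^ m).
Proof.
  intros hc hq.
  replace ((p / (sqrt c * q)) ^ 2) with (p ^ 2 / (q ^ 2 * c)).
  - unfold Rdiv; rewrite !pow_mult, Rpow_mult_distr, pow_inv, Rpow_mult_distr; reflexivity.
  - pose proof (sqrt_sqrt c (Rlt_le _ _ hc)) as hsq; pose proof (sqrt_lt_R0 c hc).
    rewrite <- hsq at 1; field; lra.
Qed.

Lemma Z_odd_neq_0 (m : Z) : Z.Odd m -> m <> 0%Z.
Proof. intros [k hk] ->; lia. Qed.

Section OddIndex.

Variable n : Z.
Hypothesis hn : Z.Odd n.

Local Notation u := (IZR n * ln alpha).

Lemma Fib_odd_pos : 0 < Fib n.
Proof.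
  rewrite Fib_odd by exact hn; pose proof sqrt5_pos; pose proof (cosh_pos u).
  apply Rdiv_lt_0_compat; lra.
Qed.

Lemma tanh_odd : tanh u = Luc n / (sqrt 5 * Fib n).
Proof.
  rewrite Luc_odd, Fib_odd by exact hn; pose proof sqrt5_pos; pose proof (cosh_pos u).
  unfold tanh; field; lra.
Qed.

Lemma tanh_add_inv_odd : tanh u + / tanh u = 2 * (Luc (2 * n) / (sqrt 5 * Fib (2 * n))).
Proof.
  assert (hu : u <> 0) by exact (IZR_mul_ln_alpha_neq_0 n (Z_odd_neq_0 n hn)).
  assert (hdouble : IZR (2 * n) * ln alpha = 2 * u) by (rewrite mult_IZR; ring).
  pose proof sqrt5_pos; pose proof (sinh_neq_0 (2 * u) ltac:(lra)).
  rewrite tanh_add_inv, Luc_even, Fib_even, hdouble by (assumption || now exists n).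
  field; lra.
Qed.

Lemma ln_1_minus_tanh_sq_odd : ln (1 - tanh u ^ 2) = 2 * ln 2 - ln 5 - 2 * ln (Fib n).
Proof.
  pose proof Fib_odd_pos.
  replace (1 - tanh u ^ 2) with (2 * 2 / (5 * (Fib n * Fib n))).
  - rewrite ln_div, !ln_mult by nra; ring.
  - pose proof sqrt5_pos; pose proof (cosh_pos u).
    rewrite one_minus_tanh_sq, Fib_odd by exact hn; rewrite <- sqrt5_sq at 1; field; lra.
Qed.

End OddIndex.

Theorem theorem11 (n : Z) (hn : Z.Odd n) :
  is_series
    (fun j : nat =>
       let k := INR (S j) in
       Luc n ^ (2 * S j) /
       (Fib n ^ (2 * S j) * 5 ^ (S j) * (2 * k - 1) * (2 * k) * (2 * k + 1)))
    (ln 2 - / 2 * ln 5 - ln (Fib n)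
     + IZR n / sqrt 5 * (Luc (2 * n) / Fib (2 * n)) * ln alpha - / 2).
Proof.
  pose proof (IZR_mul_ln_alpha_neq_0 n (Z_odd_neq_0 n hn)) as hu.
  pose proof (is_series_even_pow_div_consecutive _ (tanh_neq_0 _ hu) (Rabs_tanh_lt_1 _))
    as hseries.
  rewrite tanh_add_inv_odd, artanh_tanh, ln_1_minus_tanh_sq_odd in hseries by exact hn.
  assert (hvalue : / 2 * (2 * (Luc (2 * n) / (sqrt 5 * Fib (2 * n))) * (IZR n * ln alpha)
                          + (2 * ln 2 - ln 5 - 2 * ln (Fib n)) - 1)
    = ln 2 - / 2 * ln 5 - ln (Fib n)
      + IZR n / sqrt 5 * (Luc (2 * n) / Fib (2 * n)) * ln alpha - / 2)
    by (unfold Rdiv; rewrite Rinv_mult; lra).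
  rewrite hvalue in hseries.
  pose proof (Fib_odd_pos n hn) as hFib.
  revert hseries; apply is_series_ext; intros j; cbv zeta.
  rewrite tanh_odd, pow_sq_div_sqrt by (assumption || lra).
  unfold Rdiv; rewrite !Rinv_mult, !Rmult_assoc; reflexivity.
Qed.
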